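(* Consider the part-wise coactive learning algorithm (PCL) described in the context, run for $T$ iterations with any ordering $p_1,\dots,p_n$ of the basic parts and any rule for selecting the part $p^t$ at each iteration, interacting with a conditionally $\alpha$-informative user with $\alpha\in(0,1]$. Then $$\frac{1}{T}\sum_{t=1}^T \mathrm{CREG}_{p^t}(x^t)\le \frac{2DS\|\mathbf{w}^*\|}{\alpha\sqrt{T}}+\frac{1}{\alpha T}\sum_{t=1}^T\zeta^t,$$ where $\|\cdot\|$ is the Euclidean norm and $S:=\max_{p\in\mathcal{P}}|I_p|$.
   Context: Setting. $\mathcal{X}$ is a set of feasible configurations, with feature map $\boldsymbol{\phi}:\mathcal{X}\to\mathbb{R}^m$ satisfying $\|\boldsymbol{\phi}(x)\|_\infty\le D$ for all $x\in\mathcal{X}$. The (unknown) true utility is $u^*(x)=\langle\mathbf{w}^*,\boldsymbol{\phi}(x)\rangle$ with $\mathbf{w}^*\in\mathbb{R}^m$. There is a finite set $\mathcal{P}$ of $n$ basic parts; for $p\in\mathcal{P}$, $x_p\in\mathcal{X}_p$ is the partial configuration of $x$ on $p$ and $x_{\overline{p}}$ the partial configuration on $\overline{p}=\mathcal{P}\setminus\{p\}$; the combination operator satisfies $x=x_p\circ x_{\overline p}$, and $y_p\circ x_{\overline p}$ (for $y_p\in\mathcal{X}_p$) is the configuration obtained from $x$ by replacing its $p$-portion by $y_p$. Each basic part $p$ has a feature subset $I_p\subseteq[m]$ consisting exactly of the features that depend on $x_p$ (for $i\notin I_p$, $\phi_i(x)$ does not change when $x_p$ changes with $x_{\overline p}$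 fixed); each $I_p$ contains at least one index not in any $I_q$, $q\ne p$, and $\bigcup_p I_p=[m]$. For a weight vector $\mathbf{w}$ and $Q\subseteq[m]$, write $u[Q](x)=\sum_{i\in Q}w_i\phi_i(x)$; $u^*[Q]$ uses $\mathbf{w}^*$ and $u^t[Q]$ uses $\mathbf{w}^t$. Conditional regret: $\mathrm{CREG}_p(x)=u^*(x^*_p\circ x_{\overline p})-u^*(x)$ where $x^*_p\in\arg\max_{y_p\in\mathcal{X}_p}u^*(y_p\circ x_{\overline p})$ (maxima assumed to exist). Algorithm PCL. Fix an ordering $p_1,\dots,p_n$ of $\mathcal{P}$ and let $J_k:=I_{p_k}\setminus\bigcup_{j=k+1}^n I_{p_j}$. Set $\mathbf{w}^1=0$ and an initial configuration $x^0\in\mathcal{X}$. For $t=1,\dots,T$: select a basic part $p^t=p_k$ and write $I^t=I_{p_k}$, $J^t=J_k$; define $x^t$ by $x^t_{\overline{p^t}}=x^{t-1}_{\overline{p^t}}$ and $x^t_{p^t}\in\arg\max_{y\in\mathcal{X}_{p^t}}u^t[J^t](y\circ x^{t-1}_{\overline{p^t}})$. The user returns an improvement $\hat x^t_{p^t}\in\mathcal{X}_{p^t}$ (returning $\hat x^t_{p^t}=x^t_{p^t}$ if it cannot be improved); write $\hat x^t=\hat x^t_{p^t}\circ x^t_{\overline{p^t}}$. If $u^t[I^t](\hat x^t)-u^t[I^t](x^t)\le0$ set $Q^t=I^t$, otherwise $Q^t=J^t$. Update $w^{t+1}_i=w^t_i$ for $i\notin Q^t$ and $w^{t+1}_i=w^t_i+\phi_i(\hat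 x^t)-\phi_i(x^t)$ for $i\in Q^t$. Conditional $\alpha$-informativeness: for all $t$, $u^*[I^t](\hat x^t)-u^*[I^t](x^t)\ge\alpha\big(u^*[I^t](x^*_{p^t}\circ x^t_{\overline{p^t}})-u^*[I^t](x^t)\big)$, where $x^*_{p^t}\in\arg\max_{y\in\mathcal{X}_{p^t}}u^*(y\circ x^t_{\overline{p^t}})$. Missing utility gain: $\zeta^t=0$ if $Q^t=I^t$, and $\zeta^t=u^*[I^t\setminus J^t](\hat x^t)-u^*[I^t\setminus J^t](x^t)$ if $Q^t=J^t$. *)

From HB Require Import structures.
From mathcomp Require Import all_boot all_order all_algebra.
Set Implicit Arguments. Unset Strict Implicit. Unset Printing Implicit Defensive.
Import Order.TTheory GRing.Theory Num.Theory.
Local Open Scope ring_scope.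

Section PCL.
Variables (R : rcfType) (m : nat) (X : Type).

Definition util (phi : X -> 'I_m -> R) (w : 'I_m -> R) (Q : {set 'I_m}) (x : X) : R :=
  \sum_(i in Q) w i * phi x i.

Definition enorm (w : 'I_m -> R) : R := Num.sqrt (\sum_i w i ^+ 2).

Variables (P : finType) (n : nat).

Definition Jset (I : P -> {set 'I_m}) (ord : 'I_n -> P) (k : 'I_n) : {set 'I_m} :=
  I (ord k) :\: \bigcup_(j : 'I_n | (k < j)%N) I (ord j).

Definition Smax (I : P -> {set 'I_m}) : nat := \max_(p : P) #|I p|.

Definition Qset (phi : X -> 'I_m -> R) (w : 'I_m -> R) (It Jt : {set 'I_m})
  (x xhat : X) : {set 'I_m} :=
  if util phi w It xhat - util phi w It x <= 0 then It else Jt.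

Definition zeta (phi : X -> 'I_m -> R) (wstar w : 'I_m -> R) (It Jt : {set 'I_m})
  (x xhat : X) : R :=
  if util phi w It xhat - util phi w It x <= 0 then 0
  else util phi wstar (It :\: Jt) xhat - util phi wstar (It :\: Jt) x.

End PCL.

From HB Require Import structures.
From mathcomp Require Import all_boot all_order all_algebra.
From mathcomp Require Import ring lra.
Import Order.TTheory GRing.Theory Num.Theory.
Set Implicit Arguments. Unset Strict Implicit. Unset Printing Implicit Defensive.
Local Open Scope ring_scope.

(* This is the perceptron argument. The weights evolve as w^(t+1) = w^t + d^t,
   where d^t is the feature difference phi(xhat^t) - phi(x^t) restricted to Q^t.
   Because x^t maximises u^t on J^t, and Q^t = I^t exactly when u^t[I^t] did not
   increase, <w^t, d^t> <= 0; with |d^t|^2 <= 4 D^2 S this gives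
   |w^(T+1)|^2 <= 4 D^2 S T.  On the other hand <w*, d^t> is the true gain on I^t
   minus zeta^t, which by informativeness is at least alpha CREG - zeta^t.
   Cauchy-Schwarz on <w*, w^(T+1)> = sum_t <w*, d^t> bounds the regret. *)

Section EuclideanVectors.
Variables (R : rcfType) (ι : finType).
Implicit Types a b u : ι -> R.

Definition dotf a b : R := \sum_i a i * b i.
Definition sqnormf a : R := \sum_i a i ^+ 2.

Lemma sqnormf_ge0 a : 0 <= sqnormf a.
Proof. by apply: sumr_ge0 => i _; apply: sqr_ge0. Qed.

Lemma dotfDr u a b : dotf u (fun i => a i + b i) = dotf u a + dotf u b.
Proof. by rewrite -big_split; apply: eq_bigr => i _; rewrite mulrDr. Qed.

Lemma sqnormfD a b :
  sqnormf (fun i => a i + b i) = sqnormf a + 2 * dotf a b + sqnormf b.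
Proof.
rewrite /sqnormf /dotf mulr_sumr -!big_split /=.
by apply: eq_bigr => i _; ring.
Qed.

Lemma dotf_le_sqrt_sqnormf a b :
  dotf a b <= Num.sqrt (sqnormf a) * Num.sqrt (sqnormf b).
Proof.
rewrite /dotf /sqnormf.
set A := \sum_i a i ^+ 2; set B := \sum_i b i ^+ 2; set d := \sum_i a i * b i.
have lagrange_id : \sum_i \sum_j (a i * b j - a j * b i) ^+ 2 = 2 * (A * B - d ^+ 2).
  transitivity (\sum_i \sum_j (a i ^+ 2 * b j ^+ 2 + b i ^+ 2 * a j ^+ 2
      - 2 * (a i * b i) * (a j * b j))).
    by apply: eq_bigr => i _; apply: eq_bigr => j _; ring.
  transitivity (\sum_i (a i ^+ 2 * B + b i ^+ 2 * A - 2 * (a i * b i) * d)).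
    by apply: eq_bigr => i _; rewrite !big_split /= sumrN -!mulr_sumr.
  by rewrite !big_split /= sumrN -!mulr_suml -mulr_sumr -/A -/B -/d; ring.
have : 0 <= \sum_i \sum_j (a i * b j - a j * b i) ^+ 2.
  by apply: sumr_ge0 => i _; apply: sumr_ge0 => j _; apply: sqr_ge0.
rewrite lagrange_id => lagrange_ge0.
have A_ge0 : 0 <= A := sqnormf_ge0 a.
have d2_le : d ^+ 2 <= A * B by nra.
apply: le_trans (ler_norm d) _.
by rewrite -sqrtr_sqr -sqrtrM //; apply: ler_wsqrtr.
Qed.

End EuclideanVectors.

Section PerceptronBound.
Variables (R : rcfType) (ι : finType) (T : nat) (B : R) (w Δ : nat -> ι -> R).
Hypothesis w1 : forall i, w 1%N i = 0.
Hypothesis w_step : forall t, (0 < t <= T)%N -> forall i, w t.+1 i = w t i + Δ t i.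
Hypothesis dotf_step_le0 : forall t, (0 < t <= T)%N -> dotf (w t) (Δ t) <= 0.
Hypothesis sqnormf_step_le : forall t, (0 < t <= T)%N -> sqnormf (Δ t) <= B.

Lemma sqnormf_w_le t : (t <= T)%N -> sqnormf (w t.+1) <= t%:R * B.
Proof.
elim: t => [|t IHt] tT; first by rewrite mul0r /sqnormf big1 // => i _; rewrite w1 expr0n.
have t1T : (0 < t.+1 <= T)%N by rewrite tT.
have -> : sqnormf (w t.+2) = sqnormf (fun i => w t.+1 i + Δ t.+1 i).
  by apply: eq_bigr => i _; rewrite w_step.
rewrite sqnormfD -nat1r mulrDl mul1r.
have := IHt (ltnW tT); have := dotf_step_le0 t1T; have := sqnormf_step_le t1T; lra.
Qed.

Lemma dotf_w_sum u t : (t <= T)%N ->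
  dotf u (w t.+1) = \sum_(1 <= s < t.+1) dotf u (Δ s).
Proof.
elim: t => [|t IHt] tT; first by rewrite big_geq // /dotf big1 // => i _; rewrite w1 mulr0.
have t1T : (0 < t.+1 <= T)%N by rewrite tT.
have -> : dotf u (w t.+2) = dotf u (fun i => w t.+1 i + Δ t.+1 i).
  by apply: eq_bigr => i _; rewrite w_step.
by rewrite dotfDr IHt ?(ltnW tT) // [RHS]big_nat_recr.
Qed.

Lemma perceptron_sum_le u :
  \sum_(1 <= t < T.+1) dotf u (Δ t) <= Num.sqrt (sqnormf u) * Num.sqrt (T%:R * B).
Proof.
rewrite -dotf_w_sum //; apply: le_trans (dotf_le_sqrt_sqnormf _ _) _.
by apply: ler_wpM2l; [exact: sqrtr_ge0 | apply/ler_wsqrtr/sqnormf_w_le].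
Qed.

End PerceptronBound.

Section FeatureUpdates.
Variables (R : rcfType) (m : nat) (X : Type) (phi : X -> 'I_m -> R).
Implicit Types (a w wstar : 'I_m -> R) (Q I J : {set 'I_m}) (x y : X).

Definition feat_update Q x y (i : 'I_m) : R :=
  if i \in Q then phi y i - phi x i else 0.

Lemma dotf_feat_update a Q x y :
  dotf a (feat_update Q x y) = util phi a Q y - util phi a Q x.
Proof.
rewrite /util -sumrB [RHS]big_mkcond; apply: eq_bigr => i _.
by rewrite /feat_update; case: (i \in Q); rewrite ?mulr0 // mulrBr.
Qed.

Lemma sqnormf_feat_update_le (D : R) Q x y :
  (forall z i, `|phi z i| <= D) -> sqnormf (feat_update Q x y) <= 4 * D ^+ 2 * #|Q|%:R.
Proof.
move=> phi_le; rewrite /sqnormf (bigID (mem Q)) /= [X in _ + X]big1 ?addr0; last first.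
  by move=> i /negbTE iQ; rewrite /feat_update iQ expr0n.
rewrite -[#|Q|]sum1_card natr_sum mulr_sumr; apply: ler_sum => i iQ.
rewrite /feat_update iQ mulr1.
set d := phi y i - phi x i.
have [d_le d_ge] : d <= 2 * D /\ - (2 * D) <= d.
  move: (phi_le x i) (phi_le y i); rewrite !ler_norml => /andP[? ?] /andP[? ?].
  by rewrite /d; split; lra.
rewrite -subr_ge0 (_ : _ - _ = (2 * D - d) * (2 * D + d)); last by ring.
by apply: mulr_ge0; lra.
Qed.

Lemma util_setT_diff a Q x y :
  (forall i, i \notin Q -> phi y i = phi x i) ->
  util phi a setT y - util phi a setT x = util phi a Q y - util phi a Q x.
Proof.
move=> outside_Q; rewrite /util !(@big_setID _ _ _ _ setT Q) /= !setTI.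
rewrite [X in _ - (_ + X)](eq_bigr (fun i => a i * phi y i)); first by ring.
by move=> i; rewrite inE => /andP[/outside_Q ->].
Qed.

Lemma Qset_subset w I J x y : J \subset I -> Qset phi w I J x y \subset I.
Proof. by rewrite /Qset; case: ifP. Qed.

Lemma sqnormf_feat_update_Qset_le (P : finType) (I : P -> {set 'I_m}) p (D : R) w J x y :
  (forall z i, `|phi z i| <= D) -> J \subset I p ->
  sqnormf (feat_update (Qset phi w (I p) J x y) x y) <= 4 * D ^+ 2 * (Smax I)%:R.
Proof.
move=> phi_le JI; apply: le_trans (sqnormf_feat_update_le _ _ _ phi_le) _.
apply: ler_wpM2l; first by rewrite mulr_ge0 ?sqr_ge0.
by rewrite ler_nat (leq_trans (subset_leq_card (Qset_subset w x y JI)) (leq_bigmax _)).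
Qed.

Lemma dotf_feat_update_Qset_le0 w I J x y :
  util phi w J y <= util phi w J x ->
  dotf w (feat_update (Qset phi w I J x y) x y) <= 0.
Proof.
by rewrite dotf_feat_update /Qset; case: ifP => // _; rewrite subr_le0.
Qed.

Lemma dotf_feat_update_Qset wstar w I J x y : J \subset I ->
  dotf wstar (feat_update (Qset phi w I J x y) x y)
  = util phi wstar I y - util phi wstar I x - zeta phi wstar w I J x y.
Proof.
move=> JI; rewrite dotf_feat_update /Qset /zeta; case: ifP => _; first by rewrite subr0.
by rewrite /util !(@big_setID _ _ _ _ I J) /= !(setIidPr JI); ring.
Qed.

End FeatureUpdates.

Section RealBounds.
Variable R : rcfType.

Lemma sqrtr_nat_le (S : nat) : Num.sqrt (S%:R : R) <= S%:R.
Proof.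
have S_le_S2 : (S%:R : R) <= S%:R ^+ 2.
  by rewrite -natrX ler_nat; case: S => // S; rewrite leq_pmulr.
by rewrite -[X in _ <= X]ger0_norm // -sqrtr_sqr ler_wsqrtr.
Qed.

Lemma sqrt_sum_bound (D N : R) (S T : nat) : 0 <= N -> 0 <= D \/ N = 0 ->
  N * Num.sqrt (T%:R * (4 * D ^+ 2 * S%:R)) <= 2 * D * S%:R * N * Num.sqrt T%:R.
Proof.
move=> N_ge0 [D_ge0|->]; last by rewrite !(mul0r, mulr0).
have -> : 4 * D ^+ 2 * S%:R = (2 * D) ^+ 2 * S%:R by ring.
rewrite sqrtrM ?ler0n // sqrtrM ?sqr_ge0 // sqrtr_sqr ger0_norm ?mulr_ge0 //.
set c := 2 * D * N * Num.sqrt T%:R.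
have c_ge0 : 0 <= c by rewrite !mulr_ge0 ?sqrtr_ge0.
rewrite [leLHS](_ : _ = c * Num.sqrt S%:R); last by rewrite /c; ring.
rewrite [leRHS](_ : _ = c * S%:R); last by rewrite /c; ring.
by rewrite ler_wpM2l ?sqrtr_nat_le.
Qed.

Lemma avg_le_of_sum_le (T : nat) (alpha K C Z : R) : 0 < alpha ->
  alpha * C - Z <= K * Num.sqrt T%:R ->
  C / T%:R <= K / (alpha * Num.sqrt T%:R) + Z / (alpha * T%:R).
Proof.
move=> alpha_gt0; case: (posnP T) => [->|T_gt0].
  by rewrite sqrtr0 !(mulr0, invr0) addr0.
set sT := Num.sqrt T%:R; have sT_gt0 : 0 < sT by rewrite sqrtr_gt0 ltr0n.
have -> : (T%:R : R) = sT ^+ 2 by rewrite sqr_sqrtr ?ler0n.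
move=> sum_le; rewrite -subr_le0.
have -> : C / sT ^+ 2 - (K / (alpha * sT) + Z / (alpha * sT ^+ 2))
    = (alpha * C - Z - K * sT) / (alpha * sT ^+ 2).
  by field; rewrite !gt_eqF.
by rewrite pmulr_lle0 ?subr_le0 // invr_gt0 mulr_gt0 ?exprn_gt0.
Qed.

Lemma bound_ge0_or_enorm_eq0 (m : nat) (D : R) (f v : 'I_m -> R) :
  (forall i, `|f i| <= D) -> 0 <= D \/ enorm v = 0.
Proof.
move=> f_le; case: (posnP m) => [m0|m_gt0]; [right | left].
  by rewrite /enorm big1 ?sqrtr0 // => i; have := ltn_ord i; rewrite [X in (_ < X)%N]m0.
exact: le_trans (normr_ge0 _) (f_le (Ordinal m_gt0)).
Qed.

End RealBounds.

Theorem theorem2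
  (R : rcfType) (m : nat) (X : Type) (P : finType) (n : nat)
  (* partial configurations: x_p, and y_p o x_{pbar} *)
  (Xp : P -> Type) (proj : forall p : P, X -> Xp p)
  (replace : forall p : P, Xp p -> X -> X)
  (phi : X -> 'I_m -> R) (D : R) (wstar : 'I_m -> R)
  (I : P -> {set 'I_m}) (ord : 'I_n -> P)
  (* combination operator laws *)
  (h_comb : forall p x, replace p (proj p x) x = x)
  (h_proj : forall p y x, proj p (replace p y x) = y)
  (h_rr : forall p y z x, replace p y (replace p z x) = replace p y x)
  (* bounded features *)
  (hD : forall x i, `|phi x i| <= D)
  (* I_p is exactly the set of features depending on x_p *)
  (hI_out : forall p i, i \notin I p -> forall y x, phi (replace p y x) i = phi x i)
  (hI_in : forall p i, i \in I p -> exists y x, phi (replace p y x) i != phi x i)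
  (hI_own : forall p, exists2 i, i \in I p & forall q, q != p -> i \notin I q)
  (hI_cover : \bigcup_(p : P) I p = [set: 'I_m])
  (* ordering p_1..p_n of the parts *)
  (hord : bijective ord)
  (* the run of PCL *)
  (T : nat) (alpha : R) (halpha : 0 < alpha <= 1)
  (k : nat -> 'I_n)                         (* selection rule: p^t = p_{k t} *)
  (x : nat -> X)                            (* x 0 is the initial configuration *)
  (xp : forall t, Xp (ord (k t)))           (* x^t_{p^t} *)
  (xh : forall t, Xp (ord (k t)))           (* user's improvement hat x^t_{p^t} *)
  (xs : forall t, Xp (ord (k t)))           (* x^*_{p^t} *)
  (w : nat -> 'I_m -> R)
  (hw1 : w 1%N = (fun _ => 0))
  (hx : forall t, (0 < t <= T)%N ->
     x t = replace (ord (k t)) (xp t) (x t.-1))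
  (hxmax : forall t, (0 < t <= T)%N -> forall y,
     util phi (w t) (Jset I ord (k t)) (replace (ord (k t)) y (x t.-1))
       <= util phi (w t) (Jset I ord (k t)) (x t))
  (hw : forall t, (0 < t <= T)%N -> forall i,
     w t.+1 i =
       if i \in Qset phi (w t) (I (ord (k t))) (Jset I ord (k t))
                   (x t) (replace (ord (k t)) (xh t) (x t))
       then w t i + phi (replace (ord (k t)) (xh t) (x t)) i - phi (x t) i
       else w t i)
  (hxs : forall t, (0 < t <= T)%N -> forall y,
     util phi wstar setT (replace (ord (k t)) y (x t))
       <= util phi wstar setT (replace (ord (k t)) (xs t) (x t)))
  (* user returns x^t_{p^t} when it cannot be improved *)
  (huser_opt : forall t, (0 < t <= T)%N ->
     (forall y, util phi wstar setT (replace (ord (k t)) y (x t))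
                  <= util phi wstar setT (x t)) ->
     xh t = proj (ord (k t)) (x t))
  (* conditional alpha-informativeness *)
  (hinf : forall t, (0 < t <= T)%N ->
     util phi wstar (I (ord (k t))) (replace (ord (k t)) (xh t) (x t))
       - util phi wstar (I (ord (k t))) (x t)
     >= alpha * (util phi wstar (I (ord (k t))) (replace (ord (k t)) (xs t) (x t))
                 - util phi wstar (I (ord (k t))) (x t))) :
  (\sum_(1 <= t < T.+1)
      (util phi wstar setT (replace (ord (k t)) (xs t) (x t))
       - util phi wstar setT (x t))) / T%:R
  <= 2%:R * D * (Smax I)%:R * enorm wstar / (alpha * Num.sqrt T%:R)
     + (\sum_(1 <= t < T.+1)
          zeta phi wstar (w t) (I (ord (k t))) (Jset I ord (k t))
               (x t) (replace (ord (k t)) (xh t) (x t))) / (alpha * T%:R).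
Proof.
case/andP: halpha => alpha_gt0 _.
pose xh' t := replace (ord (k t)) (xh t) (x t).
pose Δ t := feat_update phi
  (Qset phi (w t) (I (ord (k t))) (Jset I ord (k t)) (x t) (xh' t)) (x t) (xh' t).
have w1 i : w 1%N i = 0 by rewrite hw1.
have JI t : Jset I ord (k t) \subset I (ord (k t)) := subsetDl _ _.
have w_step t : (0 < t <= T)%N -> forall i, w t.+1 i = w t i + Δ t i.
  by move=> tT i; rewrite hw // /Δ /feat_update; case: ifP => _; rewrite ?addrA ?addr0.
have dotf_step_le0 t : (0 < t <= T)%N -> dotf (w t) (Δ t) <= 0.
  move=> tT; apply: dotf_feat_update_Qset_le0.
  by rewrite /xh' {1}(hx t tT) h_rr; exact: hxmax.
have sqnormf_step_le t : (0 < t <= T)%N -> sqnormf (Δ t) <= 4 * D ^+ 2 * (Smax I)%:R.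
  by move=> _; apply: sqnormf_feat_update_Qset_le hD (JI t).
have gain_le t : (0 < t <= T)%N ->
    alpha * (util phi wstar setT (replace (ord (k t)) (xs t) (x t)) - util phi wstar setT (x t))
    - zeta phi wstar (w t) (I (ord (k t))) (Jset I ord (k t)) (x t) (xh' t)
    <= dotf wstar (Δ t).
  move=> tT; rewrite dotf_feat_update_Qset // (util_setT_diff _ (fun i iI => hI_out _ _ iI _ _)).
  by have := hinf t tT; lra.
apply: avg_le_of_sum_le alpha_gt0 _; rewrite mulr_sumr -sumrB.
apply: le_trans (_ : _ <= \sum_(1 <= t < T.+1) dotf wstar (Δ t)) _.
  by rewrite !big_nat; apply: ler_sum => t /andP[t_gt0 tT]; apply: gain_le; rewrite t_gt0.
apply: le_trans (perceptron_sum_le w1 w_step dotf_step_le0 sqnormf_step_le wstar) _.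
exact: sqrt_sum_bound (sqrtr_ge0 _) (bound_ge0_or_enorm_eq0 wstar (hD (x 0%N))).
Qed.
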